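(* Let $\mathbb{K}$ be a field of characteristic $2$, let $(A,\cdot,\{-,-\},(-)^{\{2\}})$ be a restricted Poisson algebra, and let $n\ge0$. For every $(\varphi,\omega)\in C^n_{\rm PA}(A)$ we have $\mathrm{d}^n_{\rm PA}(\varphi,\omega)\in C^{n+1}_{\rm PA}(A)$; consequently $\big(\bigoplus_{n\ge0}C^n_{\rm PA}(A),\mathrm{d}^n_{\rm PA}\big)$ is a cochain complex.
   Context: $\mathbb{K}$ has characteristic $2$. Restricted Poisson algebra: commutative associative (not necessarily unital) $(A,\cdot)$ with Lie bracket $\{-,-\}$ satisfying $\{ab,c\}=a\{b,c\}+b\{a,c\}$, and a map $(-)^{\{2\}}$ such that $(\lambda x)^{\{2\}}=\lambda^2x^{\{2\}}$, $\mathrm{ad}_{x^{\{2\}}}=\mathrm{ad}_x^2$, $(x+y)^{\{2\}}=x^{\{2\}}+y^{\{2\}}+\{x,y\}$, and $(xy)^{\{2\}}=x^2y^{\{2\}}+y^2x^{\{2\}}+xy\{x,y\}$. $\mathfrak{X}^k(A)$: alternating $k$-linear maps $A^k\to A$ that are derivations of $\cdot$ in each argument. $C^0_{\rm PA}(A)=A$, $C^1_{\rm PA}(A)=\mathfrak{X}^1(A)$; for $n\ge2$, $C^n_{\rm PA}(A)$ consists of pairs $(\varphi,\omega)$ with $\varphi\in\mathfrak{X}^n(A)$ and $\omega:A\times A^{n-2}\to A$ alternating and multilinear in its last $n-2$ arguments, such that (with $z=(z_2,\dots,z_{n-1})$): $\omega(\lambda x,z)=\lambda^2\omega(x,z)$;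 $\omega(x+y,z)=\omega(x,z)+\omega(y,z)+\varphi(x,y,z)$; $\omega(xy,z)=x^2\omega(y,z)+y^2\omega(x,z)+xy\varphi(x,y,z)$; $\omega(x,z_2,..,z_iz_i',..,z_{n-1})=z_i\omega(x,..,z_i',..)+z_i'\omega(x,..,z_i,..)$. Differentials (with $x\cdot m=\{x,m\}$): $\mathrm{d}^0(a)(x)=\{x,a\}$; $\mathrm{d}^1\psi=(\mathrm{d}_{\rm CE}\psi,\delta^1\psi)$, $\delta^1\psi(x)=\psi(x^{\{2\}})+\{x,\psi(x)\}$; $\mathrm{d}^n(\varphi,\omega)=(\mathrm{d}_{\rm CE}\varphi,\delta^n\omega)$ where $\mathrm{d}_{\rm CE}\varphi(x_1,..,x_{n+1})=\sum_{i<j}\varphi(\{x_i,x_j\},x_1,..,\hat x_i,..,\hat x_j,..,x_{n+1})+\sum_i\{x_i,\varphi(x_1,..,\hat x_i,..,x_{n+1})\}$ and $\delta^n\omega(x,z_2,..,z_n)=\{x,\varphi(x,z_2,..,z_n)\}+\sum_{i=2}^n\{z_i,\omega(x,z_2,..,\hat z_i,..,z_n)\}+\varphi(x^{\{2\}},z_2,..,z_n)+\sum_{i=2}^n\varphi(\{x,z_i\},x,z_2,..,\hat z_i,..,z_n)+\sum_{2\le i<j\le n}\omega(x,\{z_i,z_j\},z_2,..,\hat z_i,..,\hat z_j,..,z_n)$. *)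

From HB Require Import structures.
From mathcomp Require Import all_boot all_order all_algebra.
Set Implicit Arguments. Unset Strict Implicit. Unset Printing Implicit Defensive.
Import Order.TTheory GRing.Theory Num.Theory.
Local Open Scope ring_scope.

Section RPA.
Variables (K : fieldType) (V : lmodType K).
Variables (mul br : V -> V -> V) (sq : V -> V).

Definition is_comm_assoc_alg : Prop :=
  [/\ (forall a x y z, mul (a *: x + y) z = a *: mul x z + mul y z),
      (forall x y, mul x y = mul y x) &
      (forall x y z, mul x (mul y z) = mul (mul x y) z)].

Definition is_lie : Prop :=
  [/\ (forall a x y z, br (a *: x + y) z = a *: br x z + br y z),
      (forall a x y z, br z (a *: x + y) = a *: br z x + br z y),
      (forall x, br x x = 0) &
      (forall x y z, br x (br y z) + br y (br z x) + br z (br x y) = 0)].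

Definition is_leibniz : Prop :=
  forall a b c, br (mul a b) c = mul a (br b c) + mul b (br a c).

Definition is_restriction : Prop :=
  [/\ (forall (a : K) x, sq (a *: x) = a ^+ 2 *: sq x),
      (forall x y, br (sq x) y = br x (br x y)),
      (forall x y, sq (x + y) = sq x + sq y + br x y) &
      (forall x y, sq (mul x y) =
         mul (mul x x) (sq y) + mul (mul y y) (sq x) + mul (mul x y) (br x y))].

Definition is_rpa : Prop :=
  [/\ is_comm_assoc_alg, is_lie, is_leibniz & is_restriction].

(* Maps on argument lists; only lists of the relevant length matter. *)
Definition multilin (k : nat) (f : seq V -> V) : Prop :=
  forall (s : seq V) i (a : K) u v, size s = k -> (i < k)%N ->
    f (set_nth 0 s i (a *: u + v)) = a *: f (set_nth 0 s i u) + f (set_nth 0 s i v).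

Definition alternating (k : nat) (f : seq V -> V) : Prop :=
  forall (s : seq V) i j, size s = k -> (i < j)%N -> (j < k)%N ->
    nth 0 s i = nth 0 s j -> f s = 0.

Definition derivation_args (k : nat) (f : seq V -> V) : Prop :=
  forall (s : seq V) i u v, size s = k -> (i < k)%N ->
    f (set_nth 0 s i (mul u v)) =
      mul u (f (set_nth 0 s i v)) + mul v (f (set_nth 0 s i u)).

Definition isX (k : nat) (f : seq V -> V) : Prop :=
  [/\ multilin k f, alternating k f & derivation_args k f].

(* A cochain: phi (on lists of length n) and omega (x, z) with z of length n-2.
   For n = 0 the element of A is phi [::]; for n <= 1 omega is irrelevant. *)
Definition cochain := ((seq V -> V) * (V -> seq V -> V))%type.

Definition inC (n : nat) (c : cochain) : Prop :=
  let: (phi, om) := c in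
  isX n phi /\
  ((2 <= n)%N ->
   [/\ (forall (a : K) x z, size z = (n - 2)%N -> om (a *: x) z = a ^+ 2 *: om x z),
       (forall x y z, size z = (n - 2)%N -> om (x + y) z = om x z + om y z + phi [:: x, y & z]),
       (forall x y z, size z = (n - 2)%N ->
          om (mul x y) z = mul (mul x x) (om y z) + mul (mul y y) (om x z)
                           + mul (mul x y) (phi [:: x, y & z])) &
       (forall x, isX (n - 2) (om x))]).

Definition del (i : nat) (s : seq V) : seq V := take i s ++ drop i.+1 s.
Definition del2 (i j : nat) (s : seq V) : seq V := del i (del j s).

Definition dCE (phi : seq V -> V) (xs : seq V) : V :=
  \sum_(j < size xs) \sum_(i < j) phi (br (nth 0 xs i) (nth 0 xs j) :: del2 i j xs)
  + \sum_(i < size xs) br (nth 0 xs i) (phi (del i xs)).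

Definition delta (phi : seq V -> V) (om : V -> seq V -> V) (x : V) (zs : seq V) : V :=
  br x (phi (x :: zs))
  + \sum_(i < size zs) br (nth 0 zs i) (om x (del i zs))
  + phi (sq x :: zs)
  + \sum_(i < size zs) phi (br x (nth 0 zs i) :: x :: del i zs)
  + \sum_(j < size zs) \sum_(i < j) om x (br (nth 0 zs i) (nth 0 zs j) :: del2 i j zs).

(* d^n_PA(phi, omega) = (d_CE phi, delta^n omega); for n = 0, 1 this
   specializes to the given d^0, d^1. *)
Definition dPA (c : cochain) : cochain :=
  let: (phi, om) := c in (dCE phi, delta phi om).

Definition cochain_zero (n : nat) (c : cochain) : Prop :=
  let: (phi, om) := c in
  (forall s, size s = n -> phi s = 0) /\
  ((2 <= n)%N -> forall x z, size z = (n - 2)%N -> om x z = 0).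

End RPA.

From mathcomp Require Import all_boot all_order all_algebra.
From mathcomp Require Import zify.
Set Implicit Arguments. Unset Strict Implicit. Unset Printing Implicit Defensive.
Import GRing.Theory.
Local Open Scope ring_scope.

(* In characteristic 2 all signs disappear, and an alternating multiderivation
   is just a symmetric one vanishing on repeated arguments; so cochains are
   handled as such functions on lists of any length, extended by zero off their
   degree, and identities amount to cancelling summands in pairs.
   With the contraction i_a phi = phi(a, -) and the Lie derivative L_a, Cartan's
   formula i_a d = d i_a + L_a and [L_a, L_b] = L_[a,b] give d L_a = L_a d, and
   then d d = 0 by induction on the number of arguments.
   The restricted part is delta w(x) = d w(x) + L_x i_x phi + i_(x^[2]) phi. The
   axioms of x |-> x^[2] make it quadratic in x with polarization d phi, and
     delta (delta w)(x) = d d w(x) + (d L_x + L_x d) i_x phi + (L_x L_x + L_(x^[2])) phi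
   vanishes since L_x L_x = L_(x^[2]). *)

Section RestrictedPoissonCochains.
Variables (K : fieldType) (V : lmodType K).
Variables (mul br : V -> V -> V) (sq : V -> V).

Hypothesis char2 : (2%:R : K) = 0.
Hypothesis mul_linl : forall a x y z, mul (a *: x + y) z = a *: mul x z + mul y z.
Hypothesis mulC : forall x y, mul x y = mul y x.
Hypothesis mulA : forall x y z, mul x (mul y z) = mul (mul x y) z.
Hypothesis br_linl : forall a x y z, br (a *: x + y) z = a *: br x z + br y z.
Hypothesis br_linr : forall a x y z, br z (a *: x + y) = a *: br z x + br z y.
Hypothesis brxx : forall x, br x x = 0.
Hypothesis br_jacobi : forall x y z, br x (br y z) + br y (br z x) + br z (br x y) = 0.
Hypothesis br_mull : forall a b c, br (mul a b) c = mul a (br b c) + mul b (br a c).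
Hypothesis sqZ : forall (a : K) x, sq (a *: x) = a ^+ 2 *: sq x.
Hypothesis br_sql : forall x y, br (sq x) y = br x (br x y).
Hypothesis sqD : forall x y, sq (x + y) = sq x + sq y + br x y.
Hypothesis sqM : forall x y, sq (mul x y) =
  mul (mul x x) (sq y) + mul (mul y y) (sq x) + mul (mul x y) (br x y).

(** * Characteristic 2 *)

Lemma addvv (v : V) : v + v = 0.
Proof. by rewrite -mulr2n -scaler_nat char2 scale0r. Qed.

Lemma add_eq0_eq (u v : V) : u + v = 0 -> u = v.
Proof. by move=> uv0; rewrite -[v]add0r -uv0 -addrA addvv addr0. Qed.

(* [char2_cancel] proves [u = v] by flattening [u + v] into its list of
   summands and cancelling them in pairs of unifiable terms. *)
Inductive sumtree := SLeaf of V | SNode of sumtree & sumtree | SZero.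

Fixpoint sumtree_val (t : sumtree) : V :=
  match t with
  | SLeaf a => a | SNode t1 t2 => sumtree_val t1 + sumtree_val t2 | SZero => 0
  end.

Fixpoint sumtree_leaves (t : sumtree) : seq V :=
  match t with
  | SLeaf a => [:: a] | SNode t1 t2 => sumtree_leaves t1 ++ sumtree_leaves t2
  | SZero => [::]
  end.

Definition sum_list (l : seq V) : V := foldr +%R 0 l.

Lemma sum_list_cat l1 l2 : sum_list (l1 ++ l2) = sum_list l1 + sum_list l2.
Proof. by elim: l1 => [|a l IH] /=; rewrite ?add0r // IH addrA. Qed.

Lemma sumtree_valE t : sumtree_val t = sum_list (sumtree_leaves t).
Proof. by elim: t => [a|t1 IH1 t2 IH2|] /=; rewrite ?addr0 // sum_list_cat IH1 IH2. Qed.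

Fixpoint remove_nth (n : nat) (l : seq V) : seq V :=
  match l, n with
  | b :: l', 0 => l'
  | b :: l', n'.+1 => b :: remove_nth n' l'
  | [::], _ => [::]
  end.

Lemma sum_list_remove_nth n l :
  (n < size l)%N -> sum_list l = nth 0 l n + sum_list (remove_nth n l).
Proof. by elim: l n => [|b l IH] [|n] //= ltnl; rewrite (IH n ltnl) addrCA. Qed.

Lemma sum_list_cancel n a l : (n < size l)%N -> a = nth 0 l n ->
  sum_list (a :: l) = sum_list (remove_nth n l).
Proof. by move=> ltnl ->; rewrite /= (sum_list_remove_nth ltnl) addrA addvv add0r. Qed.

Ltac reify_sum e :=
  lazymatch e with
  | ?a + ?b => let ta := reify_sum a in let tb := reify_sum b in constr:(SNode ta tb)
  | 0 => constr:(SZero)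
  | _ => constr:(SLeaf e)
  end.

Ltac cancel_leaves :=
  lazymatch goal with
  | |- sum_list [::] = 0 => reflexivity
  | |- sum_list (?a :: ?l) = 0 => cancel_head a l 0%N l
  end
with cancel_head a l n l' :=
  lazymatch l' with
  | ?b :: ?q =>
      first [ unify a b; rewrite (@sum_list_cancel n a l) //; cbn [remove_nth];
              cancel_leaves
            | cancel_head a l n.+1 q ]
  | _ => fail 100 "no partner for summand" a
  end.

Ltac char2_cancel :=
  apply: add_eq0_eq;
  lazymatch goal with
  | |- ?e = 0 => let t := reify_sum e in
      change e with (sumtree_val t); rewrite sumtree_valE; cbn [sumtree_leaves cat];
      cancel_leaves
  end.

Lemma brDl x y z : br (x + y) z = br x z + br y z.
Proof. by have := br_linl 1 x y z; rewrite !scale1r. Qed.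

Lemma brDr z x y : br z (x + y) = br z x + br z y.
Proof. by have := br_linr 1 x y z; rewrite !scale1r. Qed.

Lemma br0l z : br 0 z = 0.
Proof. by apply: (addrI (br 0 z)); rewrite -brDl !addr0. Qed.

Lemma br0r z : br z 0 = 0.
Proof. by apply: (addrI (br z 0)); rewrite -brDr !addr0. Qed.

Lemma brZl a x z : br (a *: x) z = a *: br x z.
Proof. by rewrite -[a *: x]addr0 br_linl br0l addr0. Qed.

Lemma brZr a x z : br z (a *: x) = a *: br z x.
Proof. by rewrite -[a *: x]addr0 br_linr br0r addr0. Qed.

Lemma brC x y : br x y = br y x.
Proof.
by apply: add_eq0_eq; have := brxx (x + y); rewrite brDl !brDr !brxx add0r addr0.
Qed.

Lemma br_jacobil a b z : br a (br b z) = br b (br a z) + br (br a b) z.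
Proof.
by apply: add_eq0_eq; have := br_jacobi a b z; rewrite [br z a]brC [br z (br a b)]brC addrA.
Qed.

Lemma br_mulr c a b : br c (mul a b) = mul a (br c b) + mul b (br c a).
Proof. by rewrite brC br_mull ![br _ c]brC. Qed.

Lemma mulDl x y z : mul (x + y) z = mul x z + mul y z.
Proof. by have := mul_linl 1 x y z; rewrite !scale1r. Qed.

Lemma mulDr z x y : mul z (x + y) = mul z x + mul z y.
Proof. by rewrite mulC mulDl ![mul _ z]mulC. Qed.

Lemma mul0l z : mul 0 z = 0.
Proof. by apply: (addrI (mul 0 z)); rewrite -mulDl !addr0. Qed.

Lemma mul0r z : mul z 0 = 0.
Proof. by rewrite mulC mul0l. Qed.

Lemma mulCA a b c : mul a (mul b c) = mul b (mul a c).
Proof. by rewrite !mulA [mul a b]mulC. Qed.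

Lemma br_mulxx b x : br b (mul x x) = 0.
Proof. by rewrite br_mulr addvv. Qed.

Lemma br_sumr a (I : Type) (r : seq I) (F : I -> V) :
  br a (\sum_(i <- r) F i) = \sum_(i <- r) br a (F i).
Proof. exact: (big_morph (br a) (brDr a) (br0r a)). Qed.

Lemma mul_sumr a (I : Type) (r : seq I) (F : I -> V) :
  mul a (\sum_(i <- r) F i) = \sum_(i <- r) mul a (F i).
Proof. exact: (big_morph (mul a) (mulDr a) (mul0r a)). Qed.

Fixpoint picks (s : seq V) : seq (V * seq V) :=
  if s is a :: s' then (a, s') :: [seq (p.1, a :: p.2) | p <- picks s'] else [::].

Fixpoint picks2 (s : seq V) : seq (V * V * seq V) :=
  if s is a :: s' then
    [seq (a, p.1, p.2) | p <- picks s'] ++ [seq (q.1.1, q.1.2, a :: q.2) | q <- picks2 s']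
  else [::].

Lemma big_picks_cons a s (F : V -> seq V -> V) :
  \sum_(p <- picks (a :: s)) F p.1 p.2 = F a s + \sum_(p <- picks s) F p.1 (a :: p.2).
Proof. by rewrite /= big_cons big_map. Qed.

Lemma big_picks2_cons a s (G : V -> V -> seq V -> V) :
  \sum_(q <- picks2 (a :: s)) G q.1.1 q.1.2 q.2 =
  \sum_(p <- picks s) G a p.1 p.2 + \sum_(q <- picks2 s) G q.1.1 q.1.2 (a :: q.2).
Proof. by rewrite /= big_cat !big_map. Qed.

Lemma size_picks s p : p \in picks s -> (size p.2).+1 = size s.
Proof.
elim: s p => [|a s IH] p //=; rewrite in_cons => /orP [/eqP -> //|].
by case/mapP => p0 /IH sz_p0 -> /=; rewrite sz_p0.
Qed.

Lemma size_picks2 s q : q \in picks2 s -> (size q.2).+2 = size s.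
Proof.
elim: s q => [|a s IH] q //=; rewrite mem_cat => /orP [] /mapP [p0 p0s ->] /=.
  by rewrite (size_picks p0s).
by rewrite (IH _ p0s).
Qed.

Lemma del0 (a : V) s : del 0 (a :: s) = s.
Proof. by rewrite /del /= drop0. Qed.

Lemma delS i (a : V) s : del i.+1 (a :: s) = a :: del i s.
Proof. by []. Qed.

Lemma sum_del_picks s (G : V -> seq V -> V) :
  \sum_(i < size s) G (nth 0 s i) (del i s) = \sum_(p <- picks s) G p.1 p.2.
Proof.
elim: s G => [|a s IH] G; first by rewrite big_ord0 big_nil.
by rewrite big_picks_cons big_ord_recl /= del0 -(IH (fun b r => G b (a :: r))).
Qed.

Lemma sum_del2_picks2 s (G : V -> V -> seq V -> V) :
  \sum_(j < size s) \sum_(i < j) G (nth 0 s i) (nth 0 s j) (del2 i j s) =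
  \sum_(q <- picks2 s) G q.1.1 q.1.2 q.2.
Proof.
elim: s G => [|a s IH] G; first by rewrite big_ord0 big_nil.
rewrite big_picks2_cons /= big_ord_recl big_ord0 add0r -(IH (fun b c r => G b c (a :: r))).
rewrite -(sum_del_picks s (G a)) -big_split /=.
apply: eq_bigr => j _; rewrite big_ord_recl /=; congr (_ + _).
by rewrite /del2 /bump /= add0n delS del0.
Qed.

Definition perm_invariant (f : seq V -> V) := forall s t, perm_eq s t -> f s = f t.

Definition swap_invariant (f : seq V -> V) :=
  forall p x y q, f (p ++ x :: y :: q) = f (p ++ y :: x :: q).

Definition contract (a : V) (f : seq V -> V) : seq V -> V := fun s => f (a :: s).

Lemma perm_swap2 (x y : V) r : perm_eq (x :: y :: r) (y :: x :: r).
Proof. by rewrite (perm_catCA [:: x] [:: y]). Qed.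

Lemma perm_to_front (s1 s2 : seq V) a : perm_eq (s1 ++ a :: s2) (a :: s1 ++ s2).
Proof. by apply/permPl; exact: (perm_catCA s1 [:: a] s2). Qed.

Lemma swap_invariant_contract a f : swap_invariant f -> swap_invariant (contract a f).
Proof. by move=> f_swap p; apply: (f_swap (a :: p)). Qed.

Lemma swap_invariant_to_front f p a q :
  swap_invariant f -> f (p ++ a :: q) = f (a :: p ++ q).
Proof.
elim: p f => [|b p IH] f f_swap //=.
have := IH (contract b f) (swap_invariant_contract b f_swap); rewrite /contract => ->.
exact: (f_swap [::] b a).
Qed.

Lemma swap_invariant_perm f : swap_invariant f -> perm_invariant f.
Proof.
move=> f_swap s; elim: s f f_swap => [|a s IH] f f_swap t st.
  by move/perm_size: st; case: t.
have a_t : a \in t by rewrite -(perm_mem st) mem_head.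
move: st; case/splitPr: a_t => t1 t2 st; rewrite (swap_invariant_to_front _ _ _ f_swap).
apply: (IH (contract a f) (swap_invariant_contract a f_swap)).
by rewrite -(perm_cons a); apply: perm_trans st _; exact: perm_to_front.
Qed.

Lemma perm_invariant_contract a f : perm_invariant f -> perm_invariant (contract a f).
Proof. by move=> f_perm s t st; apply: f_perm; rewrite perm_cons. Qed.

Lemma perm_nth_del j (s : seq V) : (j < size s)%N -> perm_eq s (nth 0 s j :: del j s).
Proof.
move=> ltjs; rewrite /del.
rewrite {1}(_ : s = take j s ++ nth 0 s j :: drop j.+1 s); first exact: perm_to_front.
by rewrite -drop_nth // cat_take_drop.
Qed.

Lemma perm_set_nth i (s : seq V) w :
  (i < size s)%N -> perm_eq (set_nth 0 s i w) (w :: del i s).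
Proof. by move=> ltis; rewrite set_nthE ltis /del; exact: perm_to_front. Qed.

Lemma nth_del i j (s : seq V) : (i < j)%N -> (j < size s)%N -> nth 0 (del j s) i = nth 0 s i.
Proof. by move=> ltij ltjs; rewrite /del nth_cat size_take ltjs ltij nth_take. Qed.

Lemma size_del i (s : seq V) : (i < size s)%N -> size (del i s) = (size s).-1.
Proof. by move=> ltis; rewrite /del size_cat size_take ltis size_drop; lia. Qed.

(** * Symmetric multiderivations *)

Definition head_linear (f : seq V -> V) :=
  forall a x y r, f ((a *: x + y) :: r) = a *: f (x :: r) + f (y :: r).

Definition head_derivation (f : seq V -> V) :=
  forall u v r, f (mul u v :: r) = mul u (f (v :: r)) + mul v (f (u :: r)).

Definition head_alternating (f : seq V -> V) := forall a r, f (a :: a :: r) = 0.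

Record multider (f : seq V -> V) : Prop := Multider {
  multider_perm : perm_invariant f;
  multider_lin : head_linear f;
  multider_der : head_derivation f;
  multider_alt : head_alternating f }.

Definition restrict_size (k : nat) (f : seq V -> V) : seq V -> V :=
  fun s => if size s == k then f s else 0.

Lemma restrict_sizeE k f s : size s = k -> restrict_size k f s = f s.
Proof. by rewrite /restrict_size => ->; rewrite eqxx. Qed.

Lemma set_nth_cat (p : seq V) a r w : set_nth 0 (p ++ a :: r) (size p) w = p ++ w :: r.
Proof. by elim: p => //= b p ->. Qed.

Lemma set_nth_cat1 (p : seq V) a b r w :
  set_nth 0 (p ++ a :: b :: r) (size p).+1 w = p ++ a :: w :: r.
Proof. by elim: p => //= c p ->. Qed.

Lemma isX_swap_invariant k f : isX mul k f -> swap_invariant (restrict_size k f).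
Proof.
case=> f_lin f_alt _ p x y q; rewrite /restrict_size !size_cat /=.
case: eqP => // sz.
pose g u v := f (p ++ u :: v :: q).
have sz_uv u v : size (p ++ u :: v :: q) = k by rewrite size_cat.
have gDl u1 u2 v : g (u1 + u2) v = g u1 v + g u2 v.
  have := f_lin (p ++ x :: v :: q) (size p) 1 u1 u2 (sz_uv _ _).
  by rewrite !set_nth_cat !scale1r /g; apply; lia.
have gDr u v1 v2 : g u (v1 + v2) = g u v1 + g u v2.
  have := f_lin (p ++ u :: x :: q) (size p).+1 1 v1 v2 (sz_uv _ _).
  by rewrite !set_nth_cat1 !scale1r /g; apply; lia.
have gxx u : g u u = 0.
  apply: (f_alt _ (size p) (size p).+1 (sz_uv _ _)); try lia.
  by rewrite !nth_cat ltnn subnn /= ltnNge leqnSn /= subSn // subnn.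
by apply: add_eq0_eq; have := gxx (x + y); rewrite gDl !gDr !gxx add0r addr0.
Qed.

Lemma isX_multider k f : isX mul k f -> multider (restrict_size k f).
Proof.
move=> fX; have [f_lin f_alt f_der] := fX; split.
- exact: swap_invariant_perm (isX_swap_invariant fX).
- move=> a x y r; rewrite /restrict_size /=; case: eqP => sz; last by rewrite scaler0 addr0.
  by have := f_lin (x :: r) 0 a x y sz; rewrite -sz /=; apply.
- move=> u v r; rewrite /restrict_size /=; case: eqP => sz; last by rewrite !mul0r addr0.
  by have := f_der (u :: r) 0 u v sz; rewrite -sz /=; apply.
- move=> a r; rewrite /restrict_size /=; case: eqP => sz //.
  by apply: (f_alt (a :: a :: r) 0 1 sz) => //; rewrite -sz.
Qed.

Lemma multider_isX k f : multider f -> isX mul k f.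
Proof.
case=> f_perm f_lin f_der f_alt; split.
- move=> s i a u v sz ltik; rewrite -sz in ltik.
  by rewrite !(f_perm _ _ (perm_set_nth _ ltik)) f_lin.
- move=> s i j sz ltij ltjk eq_ij; rewrite -sz in ltjk.
  have ltij' : (i < size (del j s))%N by rewrite size_del //; lia.
  rewrite (f_perm _ _ (perm_nth_del ltjk)).
  rewrite (f_perm _ (nth 0 s j :: nth 0 (del j s) i :: del i (del j s))).
    by rewrite nth_del // eq_ij f_alt.
  by rewrite perm_cons; exact: perm_nth_del.
- move=> s i u v sz ltik; rewrite -sz in ltik.
  by rewrite !(f_perm _ _ (perm_set_nth _ ltik)) f_der.
Qed.

Lemma isX_eq_on_size k f g :
  (forall s, size s = k -> f s = g s) -> isX mul k g -> isX mul k f.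
Proof.
move=> eq_fg [g_lin g_alt g_der].
have sz_set (s : seq V) i w : size s = k -> (i < k)%N -> size (set_nth 0 s i w) = k.
  by move=> sz ltik; rewrite size_set_nth sz; apply/maxn_idPr.
split.
- by move=> s i a u v sz ltik; rewrite !eq_fg ?sz_set //; exact: g_lin.
- by move=> s i j sz ltij ltjk eq_ij; rewrite eq_fg //; exact: (g_alt s i j).
- by move=> s i u v sz ltik; rewrite !eq_fg ?sz_set //; exact: g_der.
Qed.

(** * Cartan calculus *)

Definition dce (f : seq V -> V) : seq V -> V := fun s =>
  \sum_(q <- picks2 s) f (br q.1.1 q.1.2 :: q.2) + \sum_(p <- picks s) br p.1 (f p.2).

Definition lie (a : V) (f : seq V -> V) : seq V -> V := fun s =>
  br a (f s) + \sum_(p <- picks s) f (br a p.1 :: p.2).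

Definition mulf (u : V) (f : seq V -> V) : seq V -> V := fun s => mul u (f s).

Lemma eq_dce f g : f =1 g -> dce f =1 dce g.
Proof.
by move=> eq_fg s; rewrite /dce; congr (_ + _); apply: eq_bigr => q _; rewrite eq_fg.
Qed.

Lemma eq_lie a f g : f =1 g -> lie a f =1 lie a g.
Proof.
by move=> eq_fg s; rewrite /lie eq_fg; congr (_ + _); apply: eq_bigr => q _; rewrite eq_fg.
Qed.

Lemma dceD f g s : dce (f \+ g) s = dce f s + dce g s.
Proof.
rewrite /dce /= !big_split /=.
under [X in _ + X = _]eq_bigr do rewrite brDr.
rewrite big_split /=; char2_cancel.
Qed.

Lemma dceZ c f s : dce (c \*: f) s = c *: dce f s.
Proof.
rewrite /dce /= scalerDr !scaler_sumr; congr (_ + _).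
by apply: eq_bigr => q _; rewrite brZr.
Qed.

Lemma dce0 : dce \0 =1 \0.
Proof. by move=> s; rewrite /dce /= big1 ?add0r ?big1 // => q _; exact: br0r. Qed.

Lemma dce_nil f : dce f [::] = 0.
Proof. by rewrite /dce /= !big_nil addr0. Qed.

Lemma lieD a f g s : lie a (f \+ g) s = lie a f s + lie a g s.
Proof. rewrite /lie /= brDr big_split /=; char2_cancel. Qed.

Lemma lieZ a c f s : lie a (c \*: f) s = c *: lie a f s.
Proof. by rewrite /lie /= scalerDr brZr scaler_sumr. Qed.

Lemma lie0 a : lie a \0 =1 \0.
Proof. by move=> s; rewrite /lie /= br0r add0r big1. Qed.

Lemma head_linear0 f r : head_linear f -> f (0 :: r) = 0.
Proof. by move=> f_lin; have := f_lin 1 0 0 r; rewrite scaler0 addr0 scale1r addvv. Qed.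

Lemma head_linearD f x y r : head_linear f -> f ((x + y) :: r) = f (x :: r) + f (y :: r).
Proof. by move=> f_lin; have := f_lin 1 x y r; rewrite !scale1r. Qed.

Lemma head_linearZ f c x r : head_linear f -> f ((c *: x) :: r) = c *: f (x :: r).
Proof. by move=> f_lin; have := f_lin c x 0 r; rewrite addr0 head_linear0 // addr0. Qed.

Lemma lie_linl c x y f s : head_linear f -> lie (c *: x + y) f s = c *: lie x f s + lie y f s.
Proof.
move=> f_lin; rewrite /lie br_linl scalerDr scaler_sumr.
under eq_bigr do rewrite br_linl f_lin.
rewrite big_split /=; char2_cancel.
Qed.

Lemma lieDl x y f s : head_linear f -> lie (x + y) f s = lie x f s + lie y f s.
Proof. by move=> f_lin; have := lie_linl 1 x y s f_lin; rewrite !scale1r. Qed.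

Lemma lieZl c x f s : head_linear f -> lie (c *: x) f s = c *: lie x f s.
Proof.
move=> f_lin; rewrite /lie brZl scalerDr scaler_sumr; congr (_ + _).
by apply: eq_bigr => p _; rewrite brZl head_linearZ.
Qed.

Lemma contract_lin c x y f :
  head_linear f -> contract (c *: x + y) f =1 c \*: contract x f \+ contract y f.
Proof. by move=> f_lin s; rewrite /contract /= f_lin. Qed.

Lemma contract_dce a f : perm_invariant f ->
  contract a (dce f) =1 dce (contract a f) \+ lie a f.
Proof.
move=> f_perm s; rewrite /contract /dce /lie /=.
rewrite (big_picks2_cons a s (fun b c r => f (br b c :: r))).
rewrite (big_picks_cons a s (fun b r => br b (f r))) /=.
have -> : \sum_(q <- picks2 s) f (br q.1.1 q.1.2 :: a :: q.2) =
          \sum_(q <- picks2 s) f (a :: br q.1.1 q.1.2 :: q.2).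
  by apply: eq_bigr => q _; apply: f_perm; exact: perm_swap2.
char2_cancel.
Qed.

Lemma lie_cons a b f s : perm_invariant f ->
  lie a f (b :: s) = lie a (contract b f) s + f (br a b :: s).
Proof.
move=> f_perm; rewrite /lie /contract (big_picks_cons b s (fun c r => f (br a c :: r))) /=.
have -> : \sum_(p <- picks s) f (br a p.1 :: b :: p.2) =
          \sum_(p <- picks s) f (b :: br a p.1 :: p.2).
  by apply: eq_bigr => q _; apply: f_perm; exact: perm_swap2.
char2_cancel.
Qed.

Lemma contract_lie a b f : perm_invariant f ->
  contract b (lie a f) =1 lie a (contract b f) \+ contract (br a b) f.
Proof. by move=> f_perm s; rewrite /contract /= lie_cons. Qed.

Lemma perm_invariant_big_picks (F : V -> seq V -> V) :
  (forall b, perm_invariant (F b)) ->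
  perm_invariant (fun s => \sum_(p <- picks s) F p.1 p.2).
Proof.
move=> F_perm; apply: swap_invariant_perm => p.
elim: p F F_perm => [|c p IH] F F_perm x y q.
  rewrite !cat0s (big_picks_cons x (y :: q) F) (big_picks_cons y q (fun b r => F b (x :: r))).
  rewrite (big_picks_cons y (x :: q) F) (big_picks_cons x q (fun b r => F b (y :: r))) /=.
  have -> : \sum_(p0 <- picks q) F p0.1 [:: x, y & p0.2] =
            \sum_(p0 <- picks q) F p0.1 [:: y, x & p0.2].
    by apply: eq_bigr => p0 _; apply: F_perm; exact: perm_swap2.
  char2_cancel.
rewrite !cat_cons (big_picks_cons c _ F) (big_picks_cons c (p ++ y :: x :: q) F).
congr (_ + _).
  by apply: F_perm; rewrite perm_cat2l; exact: perm_swap2.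
apply: (IH (fun b r => F b (c :: r))) => b s t st; apply: F_perm; by rewrite perm_cons.
Qed.

Lemma perm_invariant_lie a f : perm_invariant f -> perm_invariant (lie a f).
Proof.
move=> f_perm s t st; rewrite /lie (f_perm _ _ st); congr (_ + _).
apply: (perm_invariant_big_picks (F := fun b r => f (br a b :: r))) => // b.
exact: perm_invariant_contract.
Qed.

Lemma perm_invariant_dce f : perm_invariant f -> perm_invariant (dce f).
Proof.
move=> f_perm; apply: swap_invariant_perm => p.
elim: p f f_perm => [|c p IH] f f_perm x y q /=.
  have fx_perm := perm_invariant_contract x f_perm.
  have fy_perm := perm_invariant_contract y f_perm.
  rewrite -!/(contract x (dce f) _) -!/(contract y (dce f) _) !contract_dce //=.
  rewrite -/(contract y (dce (contract x f)) q) -/(contract x (dce (contract y f)) q).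
  rewrite !contract_dce //= !lie_cons // [br y x]brC.
  have -> : dce (contract y (contract x f)) q = dce (contract x (contract y f)) q.
    by apply: eq_dce => r; apply: f_perm; exact: perm_swap2.
  char2_cancel.
rewrite -!/(contract c (dce f) _) !contract_dce //=.
rewrite (IH (contract c f) (perm_invariant_contract c f_perm)); congr (_ + _).
by apply: perm_invariant_lie => //; rewrite perm_cat2l; exact: perm_swap2.
Qed.

Lemma big_picks_picks s (F : V -> V -> seq V -> V) :
  \sum_(p <- picks s) \sum_(p' <- picks p.2) F p.1 p'.1 p'.2 =
  \sum_(q <- picks2 s) (F q.1.1 q.1.2 q.2 + F q.1.2 q.1.1 q.2).
Proof.
elim: s F => [|a s IH] F; first by rewrite !big_nil.
rewrite (big_picks_cons a s (fun b r => \sum_(p' <- picks r) F b p'.1 p'.2)).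
rewrite (big_picks2_cons a s (fun b c r => F b c r + F c b r)) /=.
under [X in _ + X = _]eq_bigr do rewrite (big_picks_cons a _ (F _)) /=.
rewrite big_split /= (IH (fun b c r => F b c (a :: r))) !big_split /=; char2_cancel.
Qed.

Lemma big_picks_picksC s (F : V -> V -> seq V -> V) :
  \sum_(p <- picks s) \sum_(p' <- picks p.2) F p.1 p'.1 p'.2 =
  \sum_(p <- picks s) \sum_(p' <- picks p.2) F p'.1 p.1 p'.2.
Proof.
rewrite big_picks_picks (big_picks_picks s (fun b c r => F c b r)).
by apply: eq_bigr => q _; exact: addrC.
Qed.

Lemma multider0 : multider \0.
Proof. by split=> [s t _|c x y r|u v r|a r] /=; rewrite ?scaler0 ?mul0r ?addr0. Qed.

Lemma multiderD f g : multider f -> multider g -> multider (f \+ g).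
Proof.
case=> f_perm f_lin f_der f_alt [g_perm g_lin g_der g_alt]; split.
- by move=> s t st /=; rewrite (f_perm _ _ st) (g_perm _ _ st).
- by move=> c x y r /=; rewrite f_lin g_lin scalerDr; char2_cancel.
- by move=> u v r /=; rewrite f_der g_der !mulDr; char2_cancel.
- by move=> a r /=; rewrite f_alt g_alt addr0.
Qed.

Lemma multider_contract a f : multider f -> multider (contract a f).
Proof.
case=> f_perm f_lin f_der f_alt; split.
- exact: perm_invariant_contract.
- move=> c x y r; rewrite /contract !(f_perm (a :: _ :: r) (_ :: a :: r) (perm_swap2 _ _ _)).
  exact: f_lin.
- move=> u v r; rewrite /contract !(f_perm (a :: _ :: r) (_ :: a :: r) (perm_swap2 _ _ _)).
  exact: f_der.
- move=> b r; rewrite /contract (f_perm _ (b :: b :: a :: r)) //.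
  by rewrite (perm_catCA [:: a] [:: b; b]).
Qed.

Lemma contract_mul u v f : head_derivation f ->
  contract (mul u v) f =1 mulf u (contract v f) \+ mulf v (contract u f).
Proof. by move=> f_der s; rewrite /contract /mulf /= f_der. Qed.

Lemma lie_mulf a u g s : lie a (mulf u g) s = mul u (lie a g s) + mul (g s) (br a u).
Proof. rewrite /lie /mulf br_mulr mulDr mul_sumr; char2_cancel. Qed.

Lemma multider_lie a f : multider f -> multider (lie a f).
Proof.
move=> fX; have [f_perm f_lin f_der f_alt] := fX; split.
- exact: perm_invariant_lie.
- move=> c x y r; rewrite !lie_cons //.
  rewrite (eq_lie _ (contract_lin c x y f_lin)) lieD lieZ br_linr f_lin.
  rewrite [c *: (lie _ _ _ + _)]scalerDr; char2_cancel.
- move=> u v r; rewrite !lie_cons //.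
  rewrite (eq_lie _ (contract_mul u v f_der)) lieD !lie_mulf br_mulr head_linearD //.
  rewrite !f_der !mulDr [mul (contract v f r) _]mulC [mul (contract u f r) _]mulC /contract.
  char2_cancel.
- move=> b r; rewrite lie_cons // lie_cons; last exact: perm_invariant_contract.
  rewrite (eq_lie _ (fun s => f_alt b s : contract b (contract b f) s = \0 s)) lie0 /= add0r.
  by rewrite /contract (f_perm (b :: _ :: r) (_ :: b :: r) (perm_swap2 _ _ _)) addvv.
Qed.

Lemma dce_mulf u g s :
  dce (mulf u g) s = mul u (dce g s) + \sum_(p <- picks s) mul (g p.2) (br p.1 u).
Proof.
rewrite /dce /mulf mulDr !mul_sumr.
under [X in _ + X = _]eq_bigr do rewrite br_mulr.
rewrite big_split /=; char2_cancel.
Qed.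

Lemma lie_mull u v f s : head_linear f -> head_derivation f ->
  lie (mul u v) f s = mul u (lie v f s) + mul v (lie u f s) +
    \sum_(p <- picks s) (mul (br v p.1) (f (u :: p.2)) + mul (br u p.1) (f (v :: p.2))).
Proof.
move=> f_lin f_der; rewrite /lie br_mull !mulDr !mul_sumr.
under eq_bigr do rewrite br_mull head_linearD // !f_der.
rewrite !big_split /=; char2_cancel.
Qed.

Lemma multider_dce f : multider f -> multider (dce f).
Proof.
move=> fX; have [f_perm f_lin f_der f_alt] := fX; split.
- exact: perm_invariant_dce.
- move=> c x y r; rewrite -!/(contract _ (dce f) r) !contract_dce //=.
  rewrite (eq_dce (contract_lin c x y f_lin)) dceD dceZ lie_linl //.
  rewrite [c *: (dce _ _ + _)]scalerDr; char2_cancel.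
- move=> u v r; rewrite -!/(contract _ (dce f) r) !contract_dce //=.
  rewrite (eq_dce (contract_mul u v f_der)) dceD !dce_mulf lie_mull // !mulDr.
  have cross_terms :
    \sum_(p <- picks r) mul (contract v f p.2) (br p.1 u) +
    \sum_(p <- picks r) mul (contract u f p.2) (br p.1 v) +
    \sum_(p <- picks r) (mul (br v p.1) (f (u :: p.2)) + mul (br u p.1) (f (v :: p.2))) = 0.
    rewrite -!big_split big1 // => p _ /=.
    rewrite /contract [mul (f (v :: _)) _]mulC [mul (f (u :: _)) _]mulC.
    rewrite [br p.1 u]brC [br p.1 v]brC; char2_cancel.
  rewrite -[RHS]addr0 -[X in _ = _ + X]cross_terms; char2_cancel.
- move=> a r; rewrite -/(contract a (dce f) (a :: r)) contract_dce //=.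
  rewrite -/(contract a (dce (contract a f)) r) contract_dce /=;
    last exact: perm_invariant_contract.
  rewrite (eq_dce (fun s => f_alt a s : contract a (contract a f) s = \0 s)) dce0 /= add0r.
  by rewrite lie_cons // brxx -/(contract 0 f r) /contract head_linear0 // addr0 addvv.
Qed.

Lemma lie_lieE a b f s :
  lie b (lie a f) s = br b (br a (f s)) +
    \sum_(p <- picks s) (br b (f (br a p.1 :: p.2)) + br a (f (br b p.1 :: p.2))
                          + f (br a (br b p.1) :: p.2)) +
    \sum_(p <- picks s) \sum_(p' <- picks p.2) f (br a p'.1 :: br b p.1 :: p'.2).
Proof.
rewrite {1}/lie {1}/lie brDr br_sumr.
under [X in _ + X = _]eq_bigr
  do rewrite /lie (big_picks_cons _ _ (fun e r => f (br a e :: r))) /=.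
rewrite !big_split /=; char2_cancel.
Qed.

(* In characteristic 2 this is [L_a, L_b] = L_[a,b]. *)
Lemma lie_commutator a b f s : multider f ->
  lie b (lie a f) s = lie a (lie b f) s + lie (br a b) f s.
Proof.
case=> f_perm f_lin _ _; rewrite !lie_lieE /lie.
have -> : \sum_(p <- picks s) \sum_(p' <- picks p.2) f (br a p'.1 :: br b p.1 :: p'.2) =
          \sum_(p <- picks s) \sum_(p' <- picks p.2) f (br b p'.1 :: br a p.1 :: p'.2).
  rewrite (big_picks_picksC s (fun c e r => f (br a e :: br b c :: r))).
  by apply: eq_bigr => p _; apply: eq_bigr => p' _; apply: f_perm; exact: perm_swap2.
under eq_bigr do rewrite (br_jacobil a b) head_linearD //.
rewrite !big_split /= (br_jacobil a b (f s)); char2_cancel.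
Qed.

Lemma dce_lie a f : multider f -> dce (lie a f) =1 lie a (dce f).
Proof.
move=> fX s; elim: s f fX => [|b s IH] f fX.
  by rewrite dce_nil /lie /= dce_nil br0r big_nil addr0.
have f_perm := multider_perm fX.
rewrite -/(contract b (dce (lie a f)) s) contract_dce /=; last exact: perm_invariant_lie.
rewrite (eq_dce (contract_lie a b f_perm)) dceD (IH _ (multider_contract b fX)).
rewrite lie_cons; last exact: perm_invariant_dce.
rewrite (eq_lie a (contract_dce b f_perm)) lieD.
rewrite -/(contract (br a b) (dce f) s) contract_dce //= (lie_commutator _ _ s fX).
char2_cancel.
Qed.

Lemma dce_dce f : multider f -> dce (dce f) =1 \0.
Proof.
move=> fX s; elim: s f fX => [|b s IH] f fX; first exact: dce_nil.
have f_perm := multider_perm fX.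
rewrite -/(contract b (dce (dce f)) s) contract_dce /=; last exact: perm_invariant_dce.
rewrite (eq_dce (contract_dce b f_perm)) dceD (IH _ (multider_contract b fX)).
by rewrite (dce_lie b fX s) add0r addvv.
Qed.

(* The double sum vanishes because its summand is symmetric in the two picks. *)
Lemma lie_lie_sq x f s : perm_invariant f -> lie x (lie x f) s = lie (sq x) f s.
Proof.
move=> f_perm; rewrite lie_lieE /lie br_sql.
rewrite (big_picks_picks s (fun c e r => f (br x e :: br x c :: r))) /=.
rewrite [X in _ + X]big1 => [|q _]; last by rewrite (f_perm _ _ (perm_swap2 _ _ _)) addvv.
by rewrite addr0; congr (_ + _); apply: eq_bigr => p _; rewrite br_sql addvv add0r.
Qed.

(** * The restricted differential *)

Definition rdelta (f : seq V -> V) (w : V -> seq V -> V) (x : V) : seq V -> V :=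
  dce (w x) \+ lie x (contract x f) \+ contract (sq x) f.

Record rcochain (f : seq V -> V) (w : V -> seq V -> V) : Prop := RCochain {
  rcochain_multider : multider f;
  rcochain_multider_w : forall x, multider (w x);
  rcochainZ : forall (a : K) x s, w (a *: x) s = a ^+ 2 *: w x s;
  rcochainD : forall x y s, w (x + y) s = w x s + w y s + f (x :: y :: s);
  rcochainM : forall x y s, w (mul x y) s =
    mul (mul x x) (w y s) + mul (mul y y) (w x s) + mul (mul x y) (f (x :: y :: s)) }.

Lemma multider_rdelta f w x : multider f -> multider (w x) -> multider (rdelta f w x).
Proof.
move=> fX wX; apply: multiderD; last exact: multider_contract.
by apply: multiderD; [exact: multider_dce | apply: multider_lie; exact: multider_contract].
Qed.

Lemma rdelta_rdelta f w x : multider f -> (forall y, multider (w y)) ->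
  rdelta (dce f) (rdelta f w) x =1 \0.
Proof.
move=> fX wX s; have f_perm := multider_perm fX.
rewrite {1}/rdelta /= {1}/rdelta (dceD (dce (w x) \+ _)) (dceD (dce (w x))).
rewrite (dce_dce (wX x)) /= add0r.
rewrite (dce_lie x (multider_contract x fX)) (eq_lie x (contract_dce x f_perm)) lieD /=.
rewrite -/(contract (sq x) (dce f) s) contract_dce //= (lie_lie_sq _ _ f_perm).
char2_cancel.
Qed.

Lemma dce_cons2 f x y s : perm_invariant f ->
  dce f (x :: y :: s) = dce (contract y (contract x f)) s + lie y (contract x f) s
                        + lie x (contract y f) s + f (br x y :: s).
Proof.
move=> f_perm; rewrite -/(contract x (dce f) (y :: s)) contract_dce //=.
rewrite -/(contract y (dce (contract x f)) s) contract_dce /=;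
  last exact: perm_invariant_contract.
rewrite lie_cons // /contract; char2_cancel.
Qed.

Lemma rdeltaZ f w (a : K) x s : rcochain f w ->
  rdelta f w (a *: x) s = a ^+ 2 *: rdelta f w x s.
Proof.
case=> fX _ wZ _ _; have f_lin := multider_lin fX.
have w_ax : w (a *: x) =1 a ^+ 2 \*: w x by move=> r; rewrite wZ.
have f_ax : contract (a *: x) f =1 a \*: contract x f.
  by move=> r; rewrite /contract /= head_linearZ.
rewrite /rdelta /= (eq_dce w_ax) dceZ (eq_lie _ f_ax) lieZ.
rewrite lieZl; last exact: (multider_lin (multider_contract x fX)).
by rewrite scalerA -expr2 /contract sqZ head_linearZ // !scalerDr.
Qed.

Lemma rdeltaD f w x y s : rcochain f w ->
  rdelta f w (x + y) s = rdelta f w x s + rdelta f w y s + dce f (x :: y :: s).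
Proof.
case=> fX _ _ wD _; have [f_perm f_lin _ _] := fX.
have w_xy : w (x + y) =1 w x \+ w y \+ contract y (contract x f).
  by move=> r; rewrite wD.
have f_xy : contract (x + y) f =1 contract x f \+ contract y f.
  by move=> r; rewrite /contract /= head_linearD.
rewrite dce_cons2 // /rdelta /= (eq_dce w_xy) !dceD (eq_lie _ f_xy) lieD.
rewrite !lieDl; try exact: (multider_lin (multider_contract _ fX)).
rewrite /contract sqD !head_linearD //; char2_cancel.
Qed.

Lemma dce_rcochain_mul f w x y s : rcochain f w ->
  dce (w (mul x y)) s = mul (mul x x) (dce (w y) s) + mul (mul y y) (dce (w x) s)
    + mul (mul x y) (dce (contract y (contract x f)) s)
    + \sum_(p <- picks s) mul (f (x :: y :: p.2)) (br p.1 (mul x y)).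
Proof.
case=> _ _ _ _ wM.
have w_xy : w (mul x y) =1 mulf (mul x x) (w y) \+ mulf (mul y y) (w x)
                           \+ mulf (mul x y) (contract y (contract x f)).
  by move=> r; rewrite wM.
have sum_sq0 u (g : seq V -> V) : \sum_(p <- picks s) mul (g p.2) (br p.1 (mul u u)) = 0.
  by rewrite big1 // => p _; rewrite br_mulxx mul0r.
by rewrite (eq_dce w_xy) !dceD !dce_mulf !sum_sq0 !addr0 addrA.
Qed.

Lemma lie_contract_mul f x y s : multider f ->
  lie (mul x y) (contract (mul x y) f) s =
    mul (mul x x) (lie y (contract y f) s) + mul (mul y y) (lie x (contract x f) s)
    + mul (mul x y) (lie y (contract x f) s) + mul (mul x y) (lie x (contract y f) s)
    + mul x (mul (f (y :: s)) (br y x)) + mul y (mul (f (x :: s)) (br x y))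
    + \sum_(p <- picks s) (mul (br y p.1) (mul x (f (y :: x :: p.2)))
                          + mul (br x p.1) (mul y (f (x :: y :: p.2)))).
Proof.
move=> fX; have [_ f_lin f_der f_alt] := fX.
have fxyX := multider_contract (mul x y) fX.
rewrite lie_mull; [|exact: multider_lin fxyX|exact: multider_der fxyX].
rewrite !(eq_lie _ (contract_mul x y f_der)) !lieD !lie_mulf !brxx ?mul0l ?mul0r !addr0.
under [X in _ + X = _]eq_bigr do rewrite /contract !f_der !f_alt !mul0r addr0 add0r.
move: (lie y (contract y f) s) (lie x (contract x f) s) (lie y (contract x f) s)
  (lie x (contract y f) s) => L_yy L_xx L_yx L_xy.
rewrite /contract !mulDr !mulA [mul y x]mulC; char2_cancel.
Qed.

Lemma contract_sq_mul f x y s : head_linear f -> head_derivation f ->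
  contract (sq (mul x y)) f s =
    mul (mul x x) (f (sq y :: s)) + mul (mul y y) (f (sq x :: s))
    + mul (mul x y) (f (br x y :: s))
    + mul (br x y) (mul x (f (y :: s))) + mul (br x y) (mul y (f (x :: s))).
Proof.
move=> f_lin f_der.
rewrite /contract sqM !head_linearD // !f_der !addvv !mul0r !addr0 !mulDr; char2_cancel.
Qed.

Lemma rdeltaM f w x y s : rcochain f w ->
  rdelta f w (mul x y) s = mul (mul x x) (rdelta f w y s) + mul (mul y y) (rdelta f w x s)
                           + mul (mul x y) (dce f (x :: y :: s)).
Proof.
move=> fw; have fX := rcochain_multider fw; have [f_perm f_lin f_der _] := fX.
have cross_br : mul x (mul (f (y :: s)) (br y x)) + mul y (mul (f (x :: s)) (br x y))
    + mul (br x y) (mul x (f (y :: s))) + mul (br x y) (mul y (f (x :: s))) = 0.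
  by rewrite [br y x]brC !(mulCA (br x y)) ![mul (br x y) (f _)]mulC; char2_cancel.
have cross_picks : \sum_(p <- picks s) mul (f (x :: y :: p.2)) (br p.1 (mul x y)) +
    \sum_(p <- picks s) (mul (br y p.1) (mul x (f (y :: x :: p.2)))
                         + mul (br x p.1) (mul y (f (x :: y :: p.2)))) = 0.
  rewrite -big_split big1 // => p _ /=.
  rewrite (f_perm (y :: x :: p.2) (x :: y :: p.2)) ?perm_swap2 // br_mulr mulDr.
  set P := f (x :: y :: p.2).
  rewrite ![br y p.1]brC ![br x p.1]brC !(mulCA P) (mulCA (br p.1 y)) (mulCA (br p.1 x)).
  by rewrite ![mul (br _ _) P]mulC; char2_cancel.
rewrite /rdelta /= (dce_rcochain_mul _ _ _ fw) (lie_contract_mul _ _ _ fX) contract_sq_mul //.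
(* Add the two vanishing groups of cross terms to the right-hand side. *)
rewrite dce_cons2 // -[RHS]addr0 -[X in _ = _ + X](addr0 0).
rewrite -[X in _ = _ + (X + _)]cross_br -[X in _ = _ + (_ + X)]cross_picks.
move: (lie y (contract y f) s) (lie x (contract x f) s) (lie y (contract x f) s)
  (lie x (contract y f) s) (dce (w y) s) (dce (w x) s) (dce (contract y (contract x f)) s).
move=> L_yy L_xx L_yx L_xy D_y D_x D_xy.
rewrite /contract !mulDr; char2_cancel.
Qed.

Lemma rcochain_dce f w : rcochain f w -> rcochain (dce f) (rdelta f w).
Proof.
move=> fw; have [fX wX _ _ _] := fw; split=> *.
- exact: multider_dce.
- exact: multider_rdelta.
- exact: rdeltaZ.
- exact: rdeltaD.
- exact: rdeltaM.
Qed.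

Lemma dCEE f s : dCE br f s = dce f s.
Proof.
by rewrite /dCE /dce (sum_del2_picks2 s (fun b c r => f (br b c :: r)))
  (sum_del_picks s (fun b r => br b (f r))).
Qed.

Lemma deltaE phi om x z : delta br sq phi om x z =
  dce (om x) z + br x (phi (x :: z)) + \sum_(p <- picks z) phi (br x p.1 :: x :: p.2)
  + phi (sq x :: z).
Proof.
rewrite /delta /dce (sum_del2_picks2 z (fun b c r => om x (br b c :: r))).
rewrite (sum_del_picks z (fun b r => br b (om x r))).
rewrite (sum_del_picks z (fun b r => phi (br x b :: x :: r))); char2_cancel.
Qed.

Lemma dce_eq_on_size k f g s : (forall t, size t = k -> f t = g t) -> size s = k.+1 ->
  dce f s = dce g s.
Proof.
move=> eq_fg sz; rewrite /dce; congr (_ + _); apply: eq_big_seq => q q_s.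
  by rewrite eq_fg //= -[k]/(k.+1.-1) -sz -(size_picks2 q_s).
by rewrite eq_fg // -[k]/(k.+1.-1) -sz -(size_picks q_s).
Qed.

Definition represents (n : nat) (c : cochain V) (f : seq V -> V) (w : V -> seq V -> V) :=
  (forall s, size s = n -> c.1 s = f s) /\
  ((2 <= n)%N -> forall x z, size z = (n - 2)%N -> c.2 x z = w x z).

Lemma inC_represented n c : inC mul n c -> exists f w, rcochain f w /\ represents n c f w.
Proof.
case: c => phi om [phiX omC].
exists (restrict_size n phi),
  (fun x => if (2 <= n)%N then restrict_size (n - 2) (om x) else \0).
split; last by split=> [s sz|le2n x z sz] /=; rewrite ?le2n restrict_sizeE.
have [le2n|] := boolP (2 <= n)%N; last first.
  move=> /negPf gt2n; split=> [|x|a x s|x y s|x y s]; rewrite ?gt2n /=.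
  - exact: isX_multider.
  - exact: multider0.
  - by rewrite scaler0.
  - by rewrite /restrict_size /= ifF ?addr0 //; apply/eqP; lia.
  - by rewrite /restrict_size /= ifF ?mul0r ?addr0 //; apply/eqP; lia.
have [omZ omD omM omX] := omC le2n.
have size2 (s : seq V) : ((size s).+2 == n) = (size s == n - 2)%N by apply/eqP/eqP; lia.
split=> [|x|a x s|x y s|x y s]; rewrite ?le2n.
- exact: isX_multider.
- exact: isX_multider.
all: rewrite /restrict_size /= ?size2; case: eqP => sz.
all: by rewrite ?omZ ?omD ?omM ?scaler0 ?mul0r ?addr0.
Qed.

Lemma represents_dPA n c f w : perm_invariant f -> represents n c f w ->
  represents n.+1 (dPA br sq c) (dce f) (rdelta f w).
Proof.
case: c => phi om f_perm [/= phi_f om_w]; split=> [s sz|le1n x z sz] /=.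
  by rewrite dCEE; apply: dce_eq_on_size phi_f sz.
have {sz} sz : size z = (n - 1)%N by lia.
rewrite deltaE /rdelta /lie /contract /= !phi_f /= ?sz; try lia.
have -> : dce (om x) z = dce (w x) z.
  case: (leqP 2 n) => [le2n|lt_n2].
    by apply: (dce_eq_on_size (k := (n - 2)%N)); [exact: om_w | lia].
  have -> : z = [::] by apply/size0nil; lia.
  by rewrite !dce_nil.
have -> : \sum_(p <- picks z) phi (br x p.1 :: x :: p.2) =
          \sum_(p <- picks z) f (x :: br x p.1 :: p.2).
  apply: eq_big_seq => p p_z; rewrite phi_f; last by move: (size_picks p_z) => /=; lia.
  exact/f_perm/perm_swap2.
char2_cancel.
Qed.

Lemma represents_inC n c f w : rcochain f w -> represents n c f w -> inC mul n c.
Proof.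
case: c => phi om [fX wX wZ wD wM] [/= phi_f om_w]; split.
  by apply: isX_eq_on_size phi_f _; exact: multider_isX.
move=> le2n; split=> [a x z sz|x y z sz|x y z sz|x].
- by rewrite !om_w ?wZ.
- by rewrite !om_w ?phi_f ?wD //= sz; lia.
- by rewrite !om_w ?phi_f ?wM //= sz; lia.
- by apply: isX_eq_on_size (om_w le2n x) _; exact: multider_isX.
Qed.

Lemma represents_cochain_zero n c f w :
  represents n c f w -> f =1 \0 -> (forall x, w x =1 \0) -> cochain_zero n c.
Proof.
case: c => phi om [/= phi_f om_w] f0 w0.
by split=> [s sz|le2n x z sz]; rewrite ?phi_f ?om_w ?f0 ?w0.
Qed.

Lemma dPA_complex n c : inC mul n c ->
  inC mul n.+1 (dPA br sq c) /\ cochain_zero n.+2 (dPA br sq (dPA br sq c)).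
Proof.
move=> cC; have [f [w [fw c_fw]]] := inC_represented cC.
have fX := rcochain_multider fw.
have dc_fw := represents_dPA (multider_perm fX) c_fw.
split; first exact: represents_inC (rcochain_dce fw) dc_fw.
apply: represents_cochain_zero (represents_dPA (multider_perm (multider_dce fX)) dc_fw) _ _.
  exact: dce_dce fX.
by move=> x; apply: rdelta_rdelta fX (rcochain_multider_w fw).
Qed.

End RestrictedPoissonCochains.

Theorem mainTheorem4 (K : fieldType) (hK : 2%N \in [pchar K]) (V : lmodType K)
  (mul br : V -> V -> V) (sq : V -> V) (hA : is_rpa mul br sq)
  (n : nat) (c : cochain V) (hc : inC mul n c) :
  inC mul n.+1 (dPA br sq c) /\ cochain_zero n.+2 (dPA br sq (dPA br sq c)).
Proof.
case: hA => [[mul_linl mulC mulA] [br_linl br_linr brxx br_jacobi] br_mull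
  [sqZ br_sql sqD sqM]].
exact: dPA_complex (pcharf0 hK) mul_linl mulC mulA br_linl br_linr brxx br_jacobi
  br_mull sqZ br_sql sqD sqM n c hc.
Qed.
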